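(* Let $\lambda\in(0,\tfrac12)$ and let $G$ be a finite simple connected graph with $n$ vertices. Then $$mc^{e}_{\lambda}(G)\le (n-1)\lambda,$$ and equality holds for the complete graph $K_n$ (at any of its vertices).
   Context: $d(u,v)$ denotes graph distance and $[u]$ the set of neighbours of $u$. For vertices $k,l$, $s^{kl}$ is the number of shortest $k$–$l$ paths and, for an edge $uv$, $s^{kl}_{uv}$ is the number of those passing through the edge $uv$. The exponential edge betweenness of an edge $uv$ is $b^{e}_{\lambda}(uv)=\sum_{\{k,l\}}\frac{s^{kl}_{uv}}{s^{kl}}\lambda^{d(k,l)}$ over all unordered pairs $\{k,l\}$ of distinct vertices; the exponential betweenness centrality of a vertex $u$ is $c^{e}_{\lambda}(u)=\sum_{v\in[u]}b^{e}_{\lambda}(uv)$; and $mc^{e}_{\lambda}(G)=\min\{c^{e}_{\lambda}(u):u\in V(G)\}$. *)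

From mathcomp Require Import all_boot all_order all_algebra.
Set Implicit Arguments. Unset Strict Implicit. Unset Printing Implicit Defensive.
Import Order.TTheory GRing.Theory Num.Theory.
Local Open Scope ring_scope.

Section Betweenness.
Variables (T : finType) (e : rel T).

Definition simple_graph := symmetric e /\ irreflexive e.
Definition connected_graph := forall x y : T, connect e x y.

(* walks of length m from k to l, given as m-tuples of the vertices after k *)
Definition walk_of (m : nat) (k l : T) (t : m.-tuple T) : bool :=
  path e k t && (last k t == l).

Definition has_walk (m : nat) (k l : T) : bool :=
  [exists t : m.-tuple T, walk_of k l t].

(* graph distance d(k,l): least length of a walk from k to l
   (in a connected graph it is < #|T|; returns #|T| if unreachable) *)
Definition dist (k l : T) : nat := find (fun m => has_walk m k l) (iota 0 #|T|).

Definition shortest_paths (k l : T) : {set (dist k l).-tuple T} :=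
  [set t | walk_of k l t].

Definition nsp (k l : T) : nat := #|shortest_paths k l|.

Definition uses_edge (u v k : T) (s : seq T) : bool :=
  has (fun p => (p == (u, v)) || (p == (v, u))) (zip (k :: s) s).

Definition nsp_edge (u v k l : T) : nat :=
  #|[set t in shortest_paths k l | uses_edge u v k t]|.

Variable R : realFieldType.
Variable lam : R.

(* exponential edge betweenness: sum over unordered pairs {k,l}, k <> l,
   each pair counted once via the enumeration order of T *)
Definition exp_edge_betweenness (u v : T) : R :=
  \sum_(k : T) \sum_(l : T | (enum_rank k < enum_rank l)%N)
     ((nsp_edge u v k l)%:R / (nsp k l)%:R) * lam ^+ dist k l.

Definition exp_centrality (u : T) : R :=
  \sum_(v : T | e u v) exp_edge_betweenness u v.

(* minimum over all vertices (0 for the empty vertex set, never used) *)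
Definition min_exp_centrality : R :=
  if [pick u : T] is Some u0 then
    \big[Num.min/exp_centrality u0]_(u : T) exp_centrality u
  else 0.

End Betweenness.

Definition complete_graph (n : nat) : rel 'I_n := fun i j => i != j.
Arguments complete_graph n : clear implicits.

From mathcomp Require Import all_boot all_order all_algebra.
From mathcomp Require Import zify.
Set Implicit Arguments. Unset Strict Implicit. Unset Printing Implicit Defensive.
Import Order.TTheory GRing.Theory Num.Theory.

(* Summing the centralities of all vertices regroups the double sum by pairs
   {k,l}: every shortest k-l path has d(k,l) edges, each seen from both of its
   endpoints, so the pair contributes at most 2 d(k,l) lam^d(k,l) <= 2 lam,
   because d lam^d <= lam when lam <= 1/2.  The average centrality, hence the
   minimum, is thus at most (n-1) lam.  In K_n the unique shortest path between
   two vertices is the edge joining them, so every edge has betweenness lam. *)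

Lemma card_set_in_sum (I : finType) (A : {set I}) (P : pred I) :
  #|[set t in A | P t]| = (\sum_(t in A) P t)%N.
Proof.
rewrite -sum1_card big_mkcond [RHS]big_mkcond /=; apply: eq_bigr => t _.
by rewrite !inE; case: (t \in A); case: (P t).
Qed.

Lemma sum_card_rank_gt (T : finType) :
  (2 * \sum_(k : T) #|[pred l : T | enum_rank k < enum_rank l]| = #|T| * #|T|.-1)%N.
Proof.
have card_gt k : #|[pred l : T | enum_rank k < enum_rank l]|
                 = (\sum_(l : T) (enum_rank k < enum_rank l))%N.
  rewrite -(@sum1_card _ [pred l : T | enum_rank k < enum_rank l]) big_mkcond /=.
  by apply: eq_bigr => l _; rewrite inE; case: (_ < _)%N.
under eq_bigr => k _ do rewrite card_gt.
rewrite mul2n -addnn {2}exchange_big -big_split /= -sum_nat_const.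
apply: eq_bigr => k _.
rewrite -big_split /= -(cardC1 k) -(@sum1_card _ (predC1 k)) [RHS]big_mkcond /=.
apply: eq_bigr => l _; rewrite !inE.
case: (ltngtP (enum_rank k) (enum_rank l)) => [lt_kl|lt_lk|eq_kl].
- by case: eqP lt_kl => // ->; rewrite ltnn.
- by case: eqP lt_lk => // ->; rewrite ltnn.
- by rewrite (enum_rank_inj (val_inj eq_kl)) eqxx.
Qed.

Lemma sum_rank_lt_unordered_pair (T : finType) (u v : T) : u != v ->
  (\sum_(k : T) \sum_(l : T | enum_rank k < enum_rank l)
     (((k, l) == (u, v)) || ((k, l) == (v, u))))%N = 1%N.
Proof.
move=> neq_uv; rewrite pair_big_dep /=.
case: (ltngtP (enum_rank u) (enum_rank v)) => [lt_uv|lt_vu|eq_uv].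
- rewrite (bigD1 (u, v)) /=; last by rewrite lt_uv.
  rewrite eqxx /= big1 ?addn0 // => -[k l] /= /andP [lt_kl ne].
  rewrite (negbTE ne) /=; case: eqP => // -[-> ->] in lt_kl *.
  by move: (ltn_trans lt_uv lt_kl); rewrite ltnn.
- rewrite (bigD1 (v, u)) /=; last by rewrite lt_vu.
  rewrite eqxx orbT /= big1 ?addn0 // => -[k l] /= /andP [lt_kl ne].
  rewrite (negbTE ne) orbF; case: eqP => // -[-> ->] in lt_kl *.
  by move: (ltn_trans lt_vu lt_kl); rewrite ltnn.
- by move: neq_uv; rewrite (enum_rank_inj (val_inj eq_uv)) eqxx.
Qed.

Section Walks.
Variables (T : finType) (e : rel T).

Lemma has_walk0 (k l : T) : has_walk e 0 k l = (k == l).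
Proof.
apply/existsP/eqP => [[t]|->]; first by rewrite tuple0 /walk_of /= => /eqP.
by exists [tuple]; rewrite /walk_of /=.
Qed.

Lemma has_walk1 (k l : T) : has_walk e 1 k l = e k l.
Proof.
apply/existsP/idP => [[t]|ekl]; last by exists [tuple l]; rewrite /walk_of /= ekl eqxx.
by case/tupleP: t => x t; rewrite tuple0 /walk_of /= andbT => /andP[ekx /eqP <-].
Qed.

Lemma dist_edge (k l : T) : k != l -> e k l -> dist e k l = 1%N.
Proof.
move=> neq_kl ekl; rewrite /dist.
have T_gt1 : (1 < #|T|)%N.
  by apply/card_gt1P; exists k, l.
have -> : iota 0 #|T| = [:: 0, 1 & iota 2 (#|T| - 2)]%N.
  by case: #|T| T_gt1 => [|[|m]] //= _; rewrite subn2.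
by rewrite /= has_walk0 (negbTE neq_kl) has_walk1 ekl.
Qed.

Lemma shortest_paths_edge (k l : T) : k != l -> e k l ->
  nsp e k l = 1%N /\
  forall u v, nsp_edge e u v k l = (((k, l) == (u, v)) || ((k, l) == (v, u)) : nat).
Proof.
move=> neq_kl ekl; rewrite /nsp /nsp_edge /shortest_paths.
(* the tuple type depends on dist e k l, so abstract it before rewriting *)
move: (dist e k l) (dist_edge neq_kl ekl) => _ ->.
have -> : [set t : 1.-tuple T | walk_of e k l t] = [set [tuple l]].
  apply/setP => t; rewrite !inE; case/tupleP: t => x t; rewrite tuple0.
  rewrite /walk_of /= andbT -val_eqE /= eqseq_cons andbT.
  by case: eqP => [->|]; rewrite ?ekl ?andbF.
split=> [|u v]; first by rewrite cards1.
by rewrite card_set_in_sum big_set1 /uses_edge /= orbF.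
Qed.

Lemma sum_uses_edge_le (k : T) (s : seq T) :
  (\sum_u \sum_v uses_edge u v k s <= 2 * size s)%N.
Proof.
rewrite pair_bigA /=.
set steps := zip (k :: s) s.
set L := steps ++ [seq (p.2, p.1) | p <- steps].
have -> : (\sum_(p : T * T) uses_edge p.1 p.2 k s)%N
          = #|[pred p : T * T | uses_edge p.1 p.2 k s]|.
  rewrite -sum1_card [RHS]big_mkcond /=; apply: eq_bigr => p _.
  by rewrite inE; case: (uses_edge _ _ _ _).
apply: (@leq_trans #|[pred p | p \in L]|).
  apply: subset_leq_card; apply/subsetP => -[u v]; rewrite !inE /= /uses_edge.
  case/hasP => p p_in /orP[] /eqP p_eq; rewrite /L mem_cat; apply/orP.
    by left; rewrite -p_eq.
  by right; apply/mapP; exists p; [exact: p_in | rewrite p_eq].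
apply: (leq_trans (card_size _)).
by rewrite /L size_cat size_map size_zip /=; lia.
Qed.

Lemma sum_nsp_edge_le (k l : T) :
  (\sum_u \sum_(v | e u v) nsp_edge e u v k l <= 2 * dist e k l * nsp e k l)%N.
Proof.
apply: (@leq_trans (\sum_u \sum_v nsp_edge e u v k l)).
  apply: leq_sum => u _; rewrite [X in (_ <= X)%N](bigID (e u)) /=.
  exact: leq_addr.
under eq_bigr => u _ do under eq_bigr => v _ do rewrite /nsp_edge card_set_in_sum.
under eq_bigr => u _ do rewrite exchange_big /=.
rewrite exchange_big /= /nsp -sum1_card big_distrr /=.
apply: leq_sum => t _; rewrite muln1.
by have := sum_uses_edge_le k t; rewrite size_tuple.
Qed.

End Walks.

Local Open Scope ring_scope.

Lemma bigmin_mulrn_le_sum (R : realDomainType) (I : finType) (x : R) (F : I -> R) :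
  (\big[Num.min/x]_i F i) *+ #|I| <= \sum_i F i.
Proof. by rewrite -sumr_const; apply: ler_sum => i _; apply: bigmin_le. Qed.

Section ExpBounds.
Variables (R : realFieldType) (lam : R).
Hypotheses (lam_ge0 : 0 <= lam) (lam_le_half : lam <= 2^-1).

Lemma natr_mul_exp_le (d : nat) : d%:R * lam ^+ d <= lam.
Proof.
case: d => [|d]; first by rewrite mul0r.
rewrite exprS mulrCA; apply: ler_piMr => //.
have exp_le : lam ^+ d <= (2 ^+ d)^-1
  by rewrite -exprVn lerXn2r // nnegrE invr_ge0.
apply: (le_trans (ler_wpM2l (ler0n _ _) exp_le)).
by rewrite ler_pdivrMr ?exprn_gt0 // mul1r -natrX ler_nat ltn_expl.
Qed.

Lemma pair_term_le (S N d : nat) : (S <= 2 * d * N)%N ->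
  S%:R / N%:R * lam ^+ d <= 2 * lam.
Proof.
move=> S_le; have exp_ge0 := exprn_ge0 d lam_ge0.
have [->|N_gt0] := posnP N; first by rewrite invr0 mulr0 mul0r mulr_ge0.
apply: (@le_trans _ _ ((2 * d)%:R * lam ^+ d)).
  by apply: ler_wpM2r => //; rewrite ler_pdivrMr ?ltr0n // -natrM ler_nat.
by rewrite natrM -mulrA ler_wpM2l // natr_mul_exp_le.
Qed.

Lemma sum_exp_centrality_le (T : finType) (e : rel T) :
  \sum_u exp_centrality e lam u <= (#|T| * #|T|.-1)%:R * lam.
Proof.
have regroup : \sum_u exp_centrality e lam u =
    \sum_k \sum_(l | (enum_rank k < enum_rank l)%N)
      (\sum_u \sum_(v | e u v) nsp_edge e u v k l)%N%:R / (nsp e k l)%:R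
        * lam ^+ dist e k l.
  rewrite /exp_centrality /exp_edge_betweenness; symmetry.
  under eq_bigr => k _ do under eq_bigr => l _ do rewrite natr_sum !mulr_suml.
  under eq_bigr => k _ do under eq_bigr => l _ do
    under eq_bigr => u _ do rewrite natr_sum !mulr_suml.
  under eq_bigr => k _ do rewrite exchange_big /=.
  under eq_bigr => k _ do under eq_bigr => u _ do rewrite exchange_big /=.
  by rewrite exchange_big /=; apply: eq_bigr => u _; rewrite exchange_big.
rewrite regroup.
apply: (@le_trans _ _ (\sum_k \sum_(l | (enum_rank k < enum_rank l)%N) 2 * lam)).
  by do 2![apply: ler_sum => ? _]; apply/pair_term_le/sum_nsp_edge_le.
rewrite -(sum_card_rank_gt T) natrM mulrAC mulr_natr -sumrMnr.
by apply: ler_sum => k _; rewrite sumr_const.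
Qed.

Lemma min_exp_centrality_le (T : finType) (e : rel T) : (0 < #|T|)%N ->
  min_exp_centrality e lam <= (#|T|.-1)%:R * lam.
Proof.
move=> T_gt0; rewrite /min_exp_centrality.
case: pickP => [u0 _|T_empty]; last by case/card_gt0P: T_gt0 => u _; have := T_empty u.
rewrite -(@ler_pM2l _ #|T|%:R) ?ltr0n // mulr_natl mulrA -natrM.
exact: le_trans (bigmin_mulrn_le_sum _ _) (sum_exp_centrality_le e).
Qed.

End ExpBounds.

Section CompleteGraph.
Variables (n : nat) (R : realFieldType) (lam : R).

Lemma exp_edge_betweenness_complete (u v : 'I_n) : u != v ->
  exp_edge_betweenness (complete_graph n) lam u v = lam.
Proof.
move=> neq_uv; rewrite /exp_edge_betweenness.
rewrite -[RHS]mul1r -[1 in RHS]/(1%N%:R) -(sum_rank_lt_unordered_pair neq_uv).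
rewrite natr_sum mulr_suml; apply: eq_bigr => k _.
rewrite natr_sum mulr_suml; apply: eq_bigr => l lt_kl.
have neq_kl : k != l by apply: contraTneq lt_kl => ->; rewrite ltnn.
have [-> ->] := shortest_paths_edge (e := complete_graph n) neq_kl neq_kl.
by rewrite (dist_edge (e := complete_graph n) neq_kl neq_kl) divr1 expr1.
Qed.

Lemma exp_centrality_complete (u : 'I_n) :
  exp_centrality (complete_graph n) lam u = (n.-1)%:R * lam.
Proof.
rewrite /exp_centrality.
under eq_bigr => v neq_uv do rewrite exp_edge_betweenness_complete //.
rewrite sumr_const mulr_natl -[in RHS](card_ord n) -(cardC1 u).
by congr (_ *+ _); apply: eq_card => v; rewrite !inE eq_sym.
Qed.

Lemma min_exp_centrality_complete : (0 < n)%N ->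
  min_exp_centrality (complete_graph n) lam = (n.-1)%:R * lam.
Proof.
move=> n_gt0; rewrite /min_exp_centrality.
case: pickP => [u0 _|no_vertex]; last by have := no_vertex (Ordinal n_gt0).
apply/le_anti/andP; split.
  by rewrite (le_trans (bigmin_le _ u0 _)) ?exp_centrality_complete.
by apply: le_bigmin => [|u _]; rewrite exp_centrality_complete.
Qed.

End CompleteGraph.

Theorem theorem7 (R : realFieldType) (lam : R) (hlam0 : 0 < lam) (hlam1 : lam < 2^-1) :
  (forall (T : finType) (e : rel T),
      simple_graph e -> connected_graph e -> (0 < #|T|)%N ->
      min_exp_centrality e lam <= (#|T|.-1)%:R * lam)
  /\
  (forall n : nat, (0 < n)%N ->
      min_exp_centrality (complete_graph n) lam = (n.-1)%:R * lam /\
      (forall u : 'I_n, exp_centrality (complete_graph n) lam u = (n.-1)%:R * lam)).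
Proof.
split=> [T e _ _|n n_gt0].
  exact: (min_exp_centrality_le (ltW hlam0) (ltW hlam1) e).
split; [exact: min_exp_centrality_complete | exact: exp_centrality_complete].
Qed.
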